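(* Let $A\in\mathbb{R}^{p\times n}$ satisfy $A\mathbf{1}=\mathbf{0}$ and let $K\ge 1$ be an integer. Put $\beta=-\min_{i,j}(A^TA)_{ij}$, $\tilde A=\begin{bmatrix}\sqrt{\beta}\,\mathbf{1}^T\\ A\end{bmatrix}$, $W=\tilde A^T\tilde A$ and $L=\operatorname{diag}(W\mathbf{1})-W$. Then the K-means problem $$\min_{D\in\mathbb{R}^{p\times K},\,X}\|A-DX\|_F^2\quad\text{s.t. }X\in\mathcal{H}$$ and the ratio-cut problem $$\min_{X}\operatorname{tr}\{XLX^T\}\quad\text{s.t. }X\in\mathcal{H}$$ have the same solutions $X$.
   Context: $\mathbf{1}$ is the all-ones vector and $\operatorname{diag}(v)$ the diagonal matrix with diagonal $v$. $\mathcal{F}$ is the set of indicator matrices $F\in\{0,1\}^{K\times n}$ in which every column has exactly one entry equal to $1$ (row $k$ indicates membership of the samples in cluster $C_k$, of size $n_k=F_kF_k^T$, assumed nonzero). $\mathcal{H}=\{(FF^T)^{-1/2}F: F\in\mathcal{F}\}$ is the set of normalized indicator matrices (row $k$ equals $F_k/\sqrt{n_k}$). *)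

From mathcomp Require Import all_boot all_order all_algebra.
From mathcomp Require Import reals.
Set Implicit Arguments. Unset Strict Implicit. Unset Printing Implicit Defensive.
Import Order.TTheory GRing.Theory Num.Theory.
Local Open Scope ring_scope.

Section Defs.
Variable R : realType.

Definition frob2 (m n : nat) (M : 'M[R]_(m, n)) : R :=
  \sum_(i < m) \sum_(j < n) M i j ^+ 2.

Definition ones (n : nat) : 'cV[R]_n := const_mx 1.

Definition is_indicator (K n : nat) (F : 'M[R]_(K, n)) : Prop :=
  (forall k i, F k i = 0 \/ F k i = 1) /\ (forall i, \sum_(k < K) F k i = 1).

Definition csize (K n : nat) (F : 'M[R]_(K, n)) (k : 'I_K) : R :=
  (row k F *m (row k F)^T) 0 0.

(* normalized indicator matrix (FF^T)^{-1/2} F; FF^T = diag(n_k) *)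
Definition normalized_of (K n : nat) (F : 'M[R]_(K, n)) : 'M[R]_(K, n) :=
  \matrix_(k, i) (F k i / Num.sqrt (csize F k)).

Definition inH (K n : nat) (X : 'M[R]_(K, n)) : Prop :=
  exists F : 'M[R]_(K, n), is_indicator F /\ (forall k, csize F k != 0)
                           /\ X = normalized_of F.

Definition kmeans_sol (p n K : nat) (A : 'M[R]_(p, n)) (X : 'M[R]_(K, n)) : Prop :=
  inH X /\ exists D : 'M[R]_(p, K),
    forall (D' : 'M[R]_(p, K)) (X' : 'M[R]_(K, n)), inH X' ->
      frob2 (A - D *m X) <= frob2 (A - D' *m X').

Definition ratiocut_sol (n K : nat) (L : 'M[R]_n) (X : 'M[R]_(K, n)) : Prop :=
  inH X /\ forall X' : 'M[R]_(K, n), inH X' ->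
    \tr (X *m L *m X^T) <= \tr (X' *m L *m X'^T).

Definition Atilde (p n : nat) (A : 'M[R]_(p, n)) (beta : R) : 'M[R]_(1 + p, n) :=
  col_mx (const_mx (Num.sqrt beta)) A.

Definition laplacian (n : nat) (W : 'M[R]_n) : 'M[R]_n :=
  diag_mx (W *m ones n)^T - W.

End Defs.

From mathcomp Require Import all_boot all_order all_algebra.
From mathcomp Require Import reals.
From mathcomp Require Import ring lra.

Set Implicit Arguments.
Unset Strict Implicit.
Unset Printing Implicit Defensive.
Import Order.TTheory GRing.Theory Num.Theory.
Local Open Scope ring_scope.

(* Every X in H has orthonormal rows, so for fixed X the optimal centroids are
   D = A X^T and the K-means cost becomes ||A||^2 - tr(X A^T A X^T): K-means
   maximizes Q(X) = tr(X A^T A X^T) over H.  On the other side W = beta 1 1^T +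
   A^T A has constant row sums beta n because A 1 = 0, and ||X 1||^2 = n on H,
   so tr(X L X^T) = beta n (K - 1) - Q(X): ratio cut minimizes -Q over H. *)

Section Frobenius.
Variable R : realType.

Lemma frob2_tr m n (M : 'M[R]_(m, n)) : frob2 M = \tr (M *m M^T).
Proof.
rewrite /frob2 /mxtrace; apply: eq_bigr => i _; rewrite mxE.
by apply: eq_bigr => j _; rewrite mxE expr2.
Qed.

Lemma frob2_ge0 m n (M : 'M[R]_(m, n)) : 0 <= frob2 M.
Proof. by apply: sumr_ge0 => i _; apply: sumr_ge0 => j _; apply: sqr_ge0. Qed.

Lemma mxtrace_mul_trC m n (M N : 'M[R]_(m, n)) : \tr (M *m N^T) = \tr (N *m M^T).
Proof. by rewrite -mxtrace_tr trmx_mul trmxK. Qed.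

Lemma frob2B m n (M N : 'M[R]_(m, n)) :
  frob2 (M - N) = frob2 M - 2 * \tr (M *m N^T) + frob2 N.
Proof.
rewrite !frob2_tr raddfB mulmxBl !mulmxBr !raddfB /=.
rewrite (mxtrace_mul_trC N M); ring.
Qed.

Lemma frob2_mul_orthonormal m n K (D : 'M[R]_(m, K)) (X : 'M[R]_(K, n)) :
  X *m X^T = 1%:M -> frob2 (D *m X) = frob2 D.
Proof. by move=> XX; rewrite !frob2_tr trmx_mul mulmxA -(mulmxA D) XX mulmx1. Qed.

Lemma frob2_sub_mul_orthonormal p n K (A : 'M[R]_(p, n)) (D : 'M[R]_(p, K)) X :
  X *m X^T = 1%:M ->
  frob2 (A - D *m X) =
  frob2 A - \tr (X *m (A^T *m A) *m X^T) + frob2 (D - A *m X^T).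
Proof.
move=> XX; rewrite !frob2B frob2_mul_orthonormal //.
have -> : \tr (A *m (D *m X)^T) = \tr (D *m (A *m X^T)^T).
  by rewrite mxtrace_mul_trC trmx_mul trmxK mulmxA.
have -> : frob2 (A *m X^T) = \tr (X *m (A^T *m A) *m X^T).
  by rewrite frob2_tr mxtrace_mulC trmx_mul trmxK !mulmxA.
ring.
Qed.

End Frobenius.

Section Indicator.
Variables (R : realType) (K n : nat) (F : 'M[R]_(K, n)).
Hypothesis F_indicator : is_indicator F.

Lemma indicator_ge0 k i : 0 <= F k i.
Proof. by case: (F_indicator.1 k i) => ->. Qed.

Lemma indicator_sqr k i : F k i ^+ 2 = F k i.
Proof. by case: (F_indicator.1 k i) => ->; rewrite ?expr0n ?expr1n. Qed.

Lemma indicator_mul k l i : F k i * F l i = (k == l)%:R * F k i.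
Proof.
case: eqP => [->|neq_kl]; first by rewrite mul1r -expr2 indicator_sqr.
rewrite mul0r; case: (F_indicator.1 k i) => Fk; first by rewrite Fk mul0r.
case: (F_indicator.1 l i) => Fl; first by rewrite Fl mulr0.
have : F k i + F l i <= \sum_(j < K) F j i.
  rewrite (bigD1 k) //= (bigD1 l) /=; last by apply/eqP => e; apply: neq_kl.
  by rewrite lerD2l lerDl; apply: sumr_ge0 => j _; apply: indicator_ge0.
rewrite (F_indicator.2 i) Fk Fl; lra.
Qed.

Lemma csizeE k : csize F k = \sum_i F k i.
Proof. by rewrite /csize !mxE; apply: eq_bigr => i _; rewrite !mxE -expr2 indicator_sqr. Qed.

Lemma csize_ge0 k : 0 <= csize F k.
Proof. by rewrite csizeE; apply: sumr_ge0 => i _; apply: indicator_ge0. Qed.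

Hypothesis csize_neq0 : forall k, csize F k != 0.

Lemma normalized_orthonormal :
  normalized_of F *m (normalized_of F)^T = 1%:M.
Proof.
apply/matrixP => k l; rewrite !mxE.
transitivity (\sum_i (F k i * F l i) / (Num.sqrt (csize F k) * Num.sqrt (csize F l))).
  by apply: eq_bigr => i _; rewrite !mxE invfM mulrACA.
under eq_bigr => i _ do rewrite indicator_mul -mulrA.
rewrite -mulr_sumr; case: eqP => [<-|_]; last by rewrite mul0r.
by rewrite mul1r -mulr_suml -csizeE -expr2 sqr_sqrtr ?csize_ge0 // divff.
Qed.

Lemma frob2_normalized_ones : frob2 (normalized_of F *m ones R n) = n%:R.
Proof.
transitivity (\sum_(k < K) csize F k).
  apply: eq_bigr => k _; rewrite big_ord1 !mxE.
  under eq_bigr => i _ do rewrite !mxE mulr1.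
  rewrite -mulr_suml -csizeE exprMn exprVn sqr_sqrtr ?csize_ge0 //.
  by rewrite expr2 mulfK.
under eq_bigr => k _ do rewrite csizeE.
rewrite exchange_big /=; under eq_bigr => i _ do rewrite (F_indicator.2 i).
by rewrite sumr_const card_ord.
Qed.

End Indicator.

Section Clustering.
Variables (R : realType) (p n K : nat) (A : 'M[R]_(p, n)).

Lemma inH_orthonormal (X : 'M[R]_(K, n)) : inH X -> X *m X^T = 1%:M.
Proof. by case=> F [HF [HF0 ->]]; apply: normalized_orthonormal. Qed.

Lemma inH_frob2_ones (X : 'M[R]_(K, n)) : inH X -> frob2 (X *m ones R n) = n%:R.
Proof. by case=> F [HF [HF0 ->]]; apply: frob2_normalized_ones. Qed.

Definition kmeans_gain (X : 'M[R]_(K, n)) : R := \tr (X *m (A^T *m A) *m X^T).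

Lemma kmeans_solE (X : 'M[R]_(K, n)) :
  kmeans_sol A X <-> inH X /\ forall X', inH X' -> kmeans_gain X' <= kmeans_gain X.
Proof.
have cost_opt Y : inH Y -> frob2 (A - A *m Y^T *m Y) = frob2 A - kmeans_gain Y.
  move=> HY; rewrite frob2_sub_mul_orthonormal ?inH_orthonormal // subrr.
  by rewrite [frob2 0]frob2_tr mul0mx mxtrace0 addr0.
split=> [[HX [D HD]] | [HX Hmax]]; split=> //.
  move=> X' HX'; have := HD (A *m X'^T) _ HX'; rewrite cost_opt //.
  rewrite frob2_sub_mul_orthonormal ?inH_orthonormal //.
  by have := frob2_ge0 (D - A *m X^T); rewrite /kmeans_gain; lra.
exists (A *m X^T) => D' X' HX'; rewrite cost_opt //.
rewrite frob2_sub_mul_orthonormal ?inH_orthonormal //.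
by have := frob2_ge0 (D' - A *m X'^T); have := Hmax _ HX'; rewrite /kmeans_gain; lra.
Qed.

Lemma mxtrace_laplacian (W : 'M[R]_n) (d : R) (X : 'M[R]_(K, n)) :
  W *m ones R n = const_mx d ->
  \tr (X *m laplacian W *m X^T) = d * \tr (X *m X^T) - \tr (X *m W *m X^T).
Proof.
move=> W1; rewrite /laplacian W1 trmx_const diag_const_mx.
by rewrite mulmxBr mulmxBl mxtraceD raddfN /= mul_mx_scalar -scalemxAl mxtraceZ.
Qed.

Lemma gram_Atilde (beta : R) :
  (Atilde A beta)^T *m Atilde A beta =
  Num.sqrt beta ^+ 2 *: (ones R n *m (ones R n)^T) + A^T *m A.
Proof.
rewrite /Atilde tr_col_mx mul_row_col; congr (_ + _).
by apply/matrixP => i j; rewrite !mxE !big_ord1 !mxE !mulr1 expr2.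
Qed.

Lemma gram_Atilde_ones (beta : R) : A *m ones R n = 0 ->
  (Atilde A beta)^T *m Atilde A beta *m ones R n = const_mx (Num.sqrt beta ^+ 2 * n%:R).
Proof.
move=> A1; rewrite gram_Atilde mulmxDl -mulmxA A1 mulmx0 addr0 -scalemxAl -mulmxA.
apply/matrixP => i j; rewrite !mxE big_ord1 !mxE.
under eq_bigr => k _ do rewrite !mxE mulr1.
by rewrite sumr_const card_ord mul1r.
Qed.

Lemma ratiocut_cost_inH (beta : R) (X : 'M[R]_(K, n)) :
  A *m ones R n = 0 -> inH X ->
  \tr (X *m laplacian ((Atilde A beta)^T *m Atilde A beta) *m X^T) =
  Num.sqrt beta ^+ 2 * n%:R * (K%:R - 1) - kmeans_gain X.
Proof.
move=> A1 HX; rewrite (mxtrace_laplacian _ (gram_Atilde_ones _ A1)) inH_orthonormal //.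
rewrite mxtrace1 gram_Atilde mulmxDr mulmxDl mxtraceD -scalemxAr -scalemxAl mxtraceZ.
have -> : X *m (ones R n *m (ones R n)^T) *m X^T = X *m ones R n *m (X *m ones R n)^T.
  by rewrite trmx_mul !mulmxA.
by rewrite -frob2_tr inH_frob2_ones // /kmeans_gain; ring.
Qed.

End Clustering.

Theorem proposition2 (R : realType) (p n K : nat) (A : 'M[R]_(p, n)) (beta : R) :
  A *m ones R n = 0 ->
  (0 < K)%N ->
  (* beta = - min_{i,j} (A^T A)_{ij} *)
  (forall i j, - beta <= (A^T *m A) i j) ->
  (exists i j, (A^T *m A) i j = - beta) ->
  let W := (Atilde A beta)^T *m Atilde A beta in
  let L := laplacian W in
  forall X : 'M[R]_(K, n), kmeans_sol A X <-> ratiocut_sol L X.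
Proof.
move=> A1 _ _ _ W L X; rewrite kmeans_solE.
split=> [[HX Hmax] | [HX Hmin]]; split=> // X' HX'.
  by rewrite /L /W !ratiocut_cost_inH //; have := Hmax _ HX'; lra.
by have := Hmin _ HX'; rewrite /L /W !ratiocut_cost_inH //; lra.
Qed.
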